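(* Let $\alpha\in\mathcal{E}$, $R\in\mathbb{N}$, and natural numbers $x_0<\dots<x_R$ and $y_0<\dots<y_R$ with $\mathrm{MC}(\alpha)<y_0$ and $0<x_i\leq y_i$ for all $i\leq R$. If $\alpha[x_0][x_1]\cdots[x_R]>0$, then $\alpha[y_0][y_1]\cdots[y_R]>0$.
   Context: $\mathcal{E}$ is the set of ordinal notations below $\varepsilon_0$: formal sums $\omega^{\alpha_0}+\dots+\omega^{\alpha_n}$ with $\alpha_0\geq\dots\geq\alpha_n\in\mathcal{E}$ (the empty sum is $0$). The order is lexicographic: $\omega^{\alpha_0}+\dots+\omega^{\alpha_n}<\omega^{\beta_0}+\dots+\omega^{\beta_m}$ iff either $n<m$ and $\alpha_i=\beta_i$ for all $i\leq n$, or there is $i\leq\min\{n,m\}$ with $\alpha_j=\beta_j$ for $j<i$ and $\alpha_i<\beta_i$. Also $0<\alpha$ for $\alpha\neq0$. Write $1=\omega^0$. A nonzero ordinal is a successor if its last exponent $\alpha_n$ is $0$ and a limit otherwise. Every $\alpha$ has a Cantor normal form $\omega^{\alpha_0}a_0+\dots+\omega^{\alpha_n}a_n$ with $\alpha_0>\dots>\alpha_n$ and positive integers $a_i$. The maximal coefficient is $\mathrm{MC}(0)=0$ and $\mathrm{MC}(\alpha)=\max_i\{a_i,\mathrm{MC}(\alpha_i)\}$. Fundamental sequences, for $\alpha=\omega^{\alpha_0}+\dots+\omega^{\alpha_n}$ and $x\in\mathbb{N}$: $0[x]=0$. If $\alpha_n=0$ then $\alpha[x]=\omega^{\alpha_0}+\dots+\omega^{\alpha_{n-1}}$.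 If $\alpha_n=\beta+1$ then $\alpha[x]=\omega^{\alpha_0}+\dots+\omega^{\alpha_{n-1}}+\omega^\beta\cdot x$ ($x$ copies of $\omega^\beta$). If $\alpha_n$ is a limit then $\alpha[x]=\omega^{\alpha_0}+\dots+\omega^{\alpha_{n-1}}+\omega^{\alpha_n[x]}$. $\alpha[x_0][x_1]\cdots[x_R]$ denotes iterated application. *)

From Stdlib Require Import List Arith Bool Lia.
Import ListNotations.

(* Ord [a0; ...; an] denotes omega^a0 + ... + omega^an; Ord [] = 0. *)
Inductive ord : Type := Ord : list ord -> ord.

Definition exps (a : ord) : list ord := match a with Ord l => l end.

Inductive lt_ord : ord -> ord -> Prop :=
| lt_ord_intro : forall l m, lt_list l m -> lt_ord (Ord l) (Ord m)
with lt_list : list ord -> list ord -> Prop :=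
| lt_nil : forall b m, lt_list [] (b :: m)
| lt_head : forall a b l m, lt_ord a b -> lt_list (a :: l) (b :: m)
| lt_tail : forall a l m, lt_list l m -> lt_list (a :: l) (a :: m).

Definition le_ord (a b : ord) : Prop := lt_ord a b \/ a = b.

Fixpoint sorted_desc (l : list ord) : Prop :=
  match l with
  | [] => True
  | a :: l' => match l' with
               | [] => True
               | b :: _ => le_ord b a /\ sorted_desc l'
               end
  end.

Inductive inE : ord -> Prop :=
| inE_intro : forall l, Forall inE l -> sorted_desc l -> inE (Ord l).

Definition zero : ord := Ord [].
Definition one : ord := Ord [zero].

Fixpoint ord_eqb (a b : ord) {struct a} : bool :=
  match a, b with
  | Ord l, Ord m =>
    (fix go (l m : list ord) : bool :=
       match l, m with
       | [], [] => true
       | x :: l', y :: m' => ord_eqb x y && go l' m'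
       | _, _ => false
       end) l m
  end.

(* Maximal coefficient: since exponents are sorted, the Cantor normal form
   coefficient of an exponent e is the number of occurrences of e. *)
Fixpoint MC (a : ord) : nat :=
  match a with
  | Ord l =>
    let cnt (e : ord) := length (filter (fun y => ord_eqb y e) l) in
    (fix go (r : list ord) : nat :=
       match r with
       | [] => 0
       | e :: r' => Nat.max (Nat.max (cnt e) (MC e)) (go r')
       end) l
  end.

Fixpoint fs (a : ord) (x : nat) {struct a} : ord :=
  match a with
  | Ord l => Ord (
    (fix go (l : list ord) : list ord :=
       match l with
       | [] => []
       | [Ord []] => []                                  (* last exponent 0 *)
       | [y] =>
         match rev (exps y) with
         | Ord [] :: rest => repeat (Ord (rev rest)) x    (* exponent b+1 *)
         | _ => [fs y x]                                 (* limit exponent *)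
         end
       | y :: l' => y :: go l'
       end) l)
  end.

Fixpoint fs_iter (a : ord) (xs : list nat) : ord :=
  match xs with
  | [] => a
  | x :: xs' => fs_iter (fs a x) xs'
  end.

(* Write [descends n a b] when b arises from a by finitely many steps
   g |-> g[n].  Three facts about this relation give the theorem:
   - Bachmann property: a[j+1] descends to a[j] by [1]-steps, by induction
     on a; when the last exponent of a is a successor, a[j] is a prefix of
     a[j+1], and the rest of a[j+1] descends to 0 since the relation
     "b = g[n] for some n, g <> 0" is well founded;
   - monotonicity: [n]-descent implies [n']-descent for n <= n', by well-founded
     induction on the starting ordinal;
   - hence if a descends to b by [m]-steps and m <= x <= y, 0 < x, then
     a[y] descends to b[x] by [x]-steps.
   Iterating the last fact, a[y0]...[yR] descends to a[x0]...[xR], and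
   0 only descends to 0. *)

From Stdlib Require Import List Arith Lia.
Import ListNotations.

Lemma ord_nested_ind (P : ord -> Prop) :
  (forall l, Forall P l -> P (Ord l)) -> forall a, P a.
Proof.
  intros H. fix IH 1. intros [l]. apply H.
  induction l as [|c l IHl]; constructor; auto.
Qed.

Lemma lt_ord_zero_iff a : lt_ord zero a <-> a <> zero.
Proof.
  split.
  - intros H ->. inversion H as [l m Hlm]. inversion Hlm.
  - destruct a as [[|c l]]; [easy|]. intros _. repeat constructor.
Qed.

Lemma fs_iter_app a xs ys : fs_iter a (xs ++ ys) = fs_iter (fs_iter a xs) ys.
Proof. revert a. induction xs as [|x xs IH]; intros a; [reflexivity|apply IH]. Qed.

Lemma fs_cons c l x :
  l <> [] -> fs (Ord (c :: l)) x = Ord (c :: exps (fs (Ord l) x)).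
Proof. destruct l as [|d l]; [easy|]. intros _. destruct c as [[|]]; reflexivity. Qed.

Lemma fs_app p m x :
  m <> [] -> fs (Ord (p ++ m)) x = Ord (p ++ exps (fs (Ord m) x)).
Proof.
  intros Hm. induction p as [|c p IH]; [reflexivity|].
  rewrite <- app_comm_cons, fs_cons, IH by (destruct p, m; easy). reflexivity.
Qed.

Lemma fs_succ e x : fs (Ord (e ++ [zero])) x = Ord e.
Proof. rewrite fs_app by easy. now rewrite app_nil_r. Qed.

Lemma fs_omega_succ e x : fs (Ord [Ord (e ++ [zero])]) x = Ord (repeat (Ord e) x).
Proof.
  cbn [fs exps]. rewrite rev_app_distr. cbn. rewrite rev_involutive.
  destruct e as [|[[|]]]; reflexivity.
Qed.

Lemma fs_omega_limit e d x :
  d <> zero -> fs (Ord [Ord (e ++ [d])]) x = Ord [fs (Ord (e ++ [d])) x].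
Proof.
  intros Hd. cbn [fs exps]. rewrite rev_app_distr. cbn.
  destruct d as [[|c l]]; [easy|].
  destruct (e ++ [Ord (c :: l)]) eqn:E; [now destruct e|reflexivity].
Qed.

Lemma fs_omega_1 c : c <> zero -> fs (Ord [c]) 1 = Ord [fs c 1].
Proof.
  destruct c as [l]. destruct l as [|d e] using rev_ind; [easy|]. intros _.
  destruct d as [[|d0 d]].
  - now rewrite fs_omega_succ, fs_succ.
  - now rewrite fs_omega_limit.
Qed.

Inductive descends (n : nat) : ord -> ord -> Prop :=
| descends_refl a : descends n a a
| descends_step a b : descends n (fs a n) b -> descends n a b.

Lemma descends_trans n a b c : descends n a b -> descends n b c -> descends n a c.
Proof. induction 1; eauto using descends_step. Qed.

Lemma descends_fs n a : descends n a (fs a n).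
Proof. apply descends_step, descends_refl. Qed.

Lemma descends_from_zero n b : descends n zero b -> b = zero.
Proof. intros H. remember zero as a eqn:E. induction H; subst; auto. Qed.

Lemma descends_app n p a b :
  descends n a b -> descends n (Ord (p ++ exps a)) (Ord (p ++ exps b)).
Proof.
  induction 1 as [a|[[|c l]] b _ IH]; [apply descends_refl|exact IH|].
  apply descends_step. now rewrite fs_app.
Qed.

Lemma descends_omega c d : descends 1 c d -> descends 1 (Ord [c]) (Ord [d]).
Proof.
  induction 1 as [c|[[|c0 c]] d H IH]; [apply descends_refl| |].
  - apply descends_from_zero in H as ->. apply descends_refl.
  - apply descends_step. now rewrite fs_omega_1.
Qed.

Definition fs_pred (b a : ord) : Prop := a <> zero /\ exists n, b = fs a n.

Lemma Acc_fs_pred_zero : Acc fs_pred zero.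
Proof. constructor. now intros b [H _]. Qed.

Lemma Acc_fs_pred_app p a :
  Acc fs_pred (Ord p) -> Acc fs_pred a -> Acc fs_pred (Ord (p ++ exps a)).
Proof.
  intros Hp Ha. induction Ha as [[[|c m]] _ IH].
  - now rewrite app_nil_r.
  - constructor. intros b [_ [n ->]]. rewrite fs_app by easy.
    apply IH. split; [easy|eauto].
Qed.

Lemma Acc_fs_pred_repeat c n :
  Acc fs_pred (Ord [c]) -> Acc fs_pred (Ord (repeat c n)).
Proof.
  intros Hc. induction n as [|n IH]; [exact Acc_fs_pred_zero|].
  exact (Acc_fs_pred_app [c] _ Hc IH).
Qed.

Lemma Acc_fs_pred_omega c : Acc fs_pred c -> Acc fs_pred (Ord [c]).
Proof.
  induction 1 as [[l] _ IH]. constructor. intros b [_ [n ->]].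
  destruct l as [|d e] using rev_ind; [exact Acc_fs_pred_zero|].
  destruct d as [[|d0 d]].
  - rewrite fs_omega_succ. apply Acc_fs_pred_repeat, IH.
    split; [now destruct e|]. exists 0. now rewrite fs_succ.
  - rewrite fs_omega_limit by easy. apply IH. split; [now destruct e|eauto].
Qed.

Lemma fs_pred_wf : well_founded fs_pred.
Proof.
  intros a. induction a as [l Hl] using ord_nested_ind.
  induction Hl as [|c l Hc _ IHl]; [exact Acc_fs_pred_zero|].
  exact (Acc_fs_pred_app [c] (Ord l) (Acc_fs_pred_omega c Hc) IHl).
Qed.

Lemma descends_to_zero n a : descends n a zero.
Proof.
  induction (fs_pred_wf a) as [[[|c l]] _ IH]; [apply descends_refl|].
  apply descends_step, IH. split; [easy|eauto].
Qed.

Lemma descends_fs_S a j : descends 1 (fs a (S j)) (fs a j).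
Proof.
  revert j. induction a as [l Hl] using ord_nested_ind. intros j.
  destruct l as [|c p] using rev_ind; [apply descends_refl|].
  apply Forall_app in Hl as [_ Hc]. inversion Hc as [|? ? IHc _]; subst.
  rewrite !fs_app by easy. apply descends_app.
  destruct c as [l]. destruct l as [|d e] using rev_ind; [apply descends_refl|].
  destruct d as [[|d0 d]].
  - rewrite !fs_omega_succ. cbn [repeat]. rewrite repeat_cons.
    pose proof (descends_app 1 (repeat (Ord e) j) _ _ (descends_to_zero 1 (Ord [Ord e])))
      as Htail.
    now rewrite app_nil_r in Htail.
  - rewrite !fs_omega_limit by easy. apply descends_omega, IHc.
Qed.

Lemma descends_fs_le a j j' : j <= j' -> descends 1 (fs a j') (fs a j).
Proof.
  induction 1; [apply descends_refl|].
  exact (descends_trans _ _ _ _ (descends_fs_S a m) IHle).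
Qed.

Lemma descends_mono m m' a b : m <= m' -> descends m a b -> descends m' a b.
Proof.
  revert m m' b. induction (fs_pred_wf a) as [a _ IH]. intros m m' b Hm Hab.
  destruct Hab as [|a b Hab]; [apply descends_refl|].
  destruct a as [[|c l]].
  { apply descends_from_zero in Hab as ->. apply descends_refl. }
  destruct m' as [|m']; [replace m with 0 in Hab by lia; now apply descends_step|].
  assert (Hpred : forall n, fs_pred (fs (Ord (c :: l)) n) (Ord (c :: l)))
    by (intros n; split; [easy|eauto]).
  apply descends_step, descends_trans with (fs (Ord (c :: l)) m).
  - apply (IH _ (Hpred (S m')) 1); [lia|]. now apply descends_fs_le.
  - exact (IH _ (Hpred m) m _ _ Hm Hab).
Qed.

Lemma descends_fs_fs n a b : descends n a b -> descends n (fs a n) (fs b n).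
Proof.
  destruct 1 as [|a b H]; [apply descends_refl|].
  exact (descends_trans _ _ _ _ H (descends_fs n b)).
Qed.

Lemma descends_fs_le_fs m x y a b :
  descends m a b -> m <= x -> 0 < x -> x <= y -> descends x (fs a y) (fs b x).
Proof.
  intros Hab Hmx Hx Hxy. apply descends_trans with (fs a x).
  - exact (descends_mono 1 x _ _ Hx (descends_fs_le a x y Hxy)).
  - exact (descends_fs_fs x a b (descends_mono m x a b Hmx Hab)).
Qed.

Section Iterates.

Variables (R : nat) (x y : nat -> nat).
Hypothesis x_le_S : forall i, i < R -> x i <= x (S i).
Hypothesis x_pos_le_y : forall i, i <= R -> 0 < x i /\ x i <= y i.

Lemma descends_fs_iter a i : i <= R ->
  descends (x i) (fs_iter a (map y (seq 0 (S i)))) (fs_iter a (map x (seq 0 (S i)))).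
Proof.
  induction i as [|i IH]; intros Hi.
  - destruct (x_pos_le_y 0) as [Hx Hxy]; [lia|].
    exact (descends_fs_le_fs 0 _ _ a a (descends_refl 0 a) (Nat.le_0_l _) Hx Hxy).
  - destruct (x_pos_le_y (S i)) as [Hx Hxy]; [lia|].
    rewrite seq_S, !map_app, !fs_iter_app.
    exact (descends_fs_le_fs _ _ _ _ _ (IH ltac:(lia)) (x_le_S i ltac:(lia)) Hx Hxy).
Qed.

End Iterates.

Theorem lemma2p6 (alpha : ord) (R : nat) (x y : nat -> nat) :
  inE alpha ->
  (forall i, i < R -> x i < x (S i)) ->
  (forall i, i < R -> y i < y (S i)) ->
  MC alpha < y 0 ->
  (forall i, i <= R -> 0 < x i /\ x i <= y i) ->
  lt_ord zero (fs_iter alpha (map x (seq 0 (S R)))) ->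
  lt_ord zero (fs_iter alpha (map y (seq 0 (S R)))).
Proof.
  intros _ Hx _ _ Hxy Hpos. apply lt_ord_zero_iff. intros Hzero.
  assert (Hdesc := descends_fs_iter R x y
                     (fun i Hi => Nat.lt_le_incl _ _ (Hx i Hi)) Hxy alpha R (le_n R)).
  rewrite Hzero in Hdesc. apply descends_from_zero in Hdesc.
  now apply lt_ord_zero_iff in Hpos.
Qed.
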